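(* Let $N\ge 2$, $a\in\mathbb{R}$, and let $P\in\mathbb{R}^{N\times N}$ be a symmetric, doubly stochastic matrix with nonnegative entries whose eigenvalues satisfy $-1<\lambda_N(P)\le\dots\le\lambda_2(P)<\lambda_1(P)=1$. Consider the state $x_{t+1}=ax_t+r_t$ and observations $y_{i,t}=x_t+w_{i,t}$, where the innovations $r_t$ and observation noises $w_{i,t}$ have zero mean, and for a signal weight $\alpha\in(0,1]$ the estimates $$\hat{x}_{i,t+1}=a\Big(\sum_{j=1}^N p_{ij}\hat{x}_{j,t}+\alpha(y_{i,t}-\hat{x}_{i,t})\Big),\qquad \tilde{x}_{i,t+1}=a\Big(\sum_{j=1}^N p_{ij}\tilde{x}_{j,t}+\alpha\Big(\sum_{j=1}^N p_{ij}y_{j,t}-\tilde{x}_{i,t}\Big)\Big).$$ Call the estimates asymptotically unbiased for $\alpha$ if, for every choice of initial estimates, $\mathbb{E}[\hat{x}_{i,t}-x_t]\to 0$ and $\mathbb{E}[\tilde{x}_{i,t}-x_t]\to0$ as $t\to\infty$ for all $i$ (equivalently, the spectral radius of $a(P-\alpha I_N)$ is less than $1$). Then there exists $\alpha\in(0,1]$ for which the estimates are asymptotically unbiased if and only if $$|a|<\frac{2}{1-\lambda_N(P)}.$$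
   Context: $a$ is the (known) rate of change of the state; $x_0$ is a random initial state with finite mean. *)

From HB Require Import structures.
From mathcomp Require Import all_boot all_order all_algebra.
From mathcomp Require Import all_classical all_reals all_analysis.
Set Implicit Arguments. Unset Strict Implicit. Unset Printing Implicit Defensive.
Import Order.TTheory GRing.Theory Num.Theory.
Local Open Scope classical_set_scope.
Local Open Scope ring_scope.

Definition sym_doubly_stochastic (R : realType) (N : nat) (P : 'M[R]_N) :=
  [/\ P^T = P,
      (forall i j, 0 <= P i j),
      (forall i, \sum_(j < N) P i j = 1) &
      (forall j, \sum_(i < N) P i j = 1)].

Fixpoint xhat (T : Type) (R : realType) (N : nat) (P : 'M[R]_N) (a alpha : R)
  (y : 'I_N -> nat -> T -> R) (xh0 : 'I_N -> R) (t : nat) : 'I_N -> T -> R :=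
  match t with
  | 0 => fun i _ => xh0 i
  | t'.+1 => fun i om =>
      a * (\sum_(j < N) P i j * xhat P a alpha y xh0 t' j om
           + alpha * (y i t' om - xhat P a alpha y xh0 t' i om))
  end.

Fixpoint xtil (T : Type) (R : realType) (N : nat) (P : 'M[R]_N) (a alpha : R)
  (y : 'I_N -> nat -> T -> R) (xt0 : 'I_N -> R) (t : nat) : 'I_N -> T -> R :=
  match t with
  | 0 => fun i _ => xt0 i
  | t'.+1 => fun i om =>
      a * (\sum_(j < N) P i j * xtil P a alpha y xt0 t' j om
           + alpha * (\sum_(j < N) P i j * y j t' om - xtil P a alpha y xt0 t' i om))
  end.

Definition asympt_unbiased d (T : measurableType d) (R : realType)
  (Pr : probability T R) (N : nat) (P : 'M[R]_N) (a alpha : R)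
  (x : nat -> T -> R) (y : 'I_N -> nat -> T -> R) : Prop :=
  forall (xh0 xt0 : 'I_N -> R) (i : 'I_N),
    ((fun t => ('E_Pr[(fun om => xhat P a alpha y xh0 t i om - x t om)%R])%E) @ \oo --> 0%E)
    /\ ((fun t => ('E_Pr[(fun om => xtil P a alpha y xt0 t i om - x t om)%R])%E) @ \oo --> 0%E).

From HB Require Import structures.
From mathcomp Require Import all_boot all_order all_algebra.
From mathcomp Require Import all_classical all_reals all_analysis.
From mathcomp Require Import ring lra.
Import Order.TTheory GRing.Theory Num.Theory numFieldNormedType.Exports.

(* Taking expectations, both mean estimation errors obey
   [e_(t+1) = a (P - alpha I) e_t] (the noises are centred and the rows of [P]
   sum to 1), and every [e_0] is realised by some initial estimate; so
   unbiasedness for [alpha] means [|a (l - alpha)| < 1] for every eigenvalue [l]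
   of [P].  All eigenvalues lie in [[lambda_N, 1]].  If [|a| (1 - lambda_N) < 2],
   the midpoint [alpha = (1 + lambda_N) / 2] is within [(1 - lambda_N) / 2] of
   all of them.  Otherwise, for any [alpha], either [|a| (1 - alpha) >= 1] or
   [|a| |lambda_N - alpha| > 1], and the eigenvector of [1] (the constant
   vector) resp. of [lambda_N] is not damped. *)
Set Implicit Arguments.
Unset Strict Implicit.
Unset Printing Implicit Defensive.

Local Open Scope classical_set_scope.
Local Open Scope ring_scope.

Section Convergence.
Variable R : realType.

Lemma cvg_EFinP {I : Type} (F : set_system I) {FF : Filter F} (c : I -> R) l :
  ((fun i => (c i)%:E) @ F --> l%:E) <-> (c @ F --> l).
Proof. by rewrite fine_cvgP; split=> [[]|cl] //; split=> //; apply: nearW. Qed.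

(* Once [s] is below [(1 - |mu|) e / 2], the recursion keeps [|u|] below
   [|mu|^k |u T| + e / 2], whose first term vanishes. *)
Lemma affine_recursion_cvg0 (u s : nat -> R) (mu : R) :
  `|mu| < 1 -> s @ \oo --> 0 -> (forall t, u t.+1 = mu * u t + s t) ->
  u @ \oo --> 0.
Proof.
move=> mu_lt1 s0 uS; apply/cvgrPdist_le => e e_gt0.
set q := `|mu|.
have d_gt0 : 0 < (1 - q) * e / 2 by rewrite divr_gt0 // mulr_gt0 // subr_gt0.
move/cvgrPdist_le: s0 => /(_ _ d_gt0) [T _ sT].
have u_bound k : `|u (T + k)%N| <= q ^+ k * `|u T| + e / 2.
  elim: k => [|k IHk]; first by rewrite addn0 expr0 mul1r lerDl divr_ge0 // ltW.
  have sk : `|s (T + k)%N| <= (1 - q) * e / 2.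
    by have := sT (T + k)%N (leq_addr _ _); rewrite sub0r normrN.
  rewrite addnS uS; apply: (le_trans (ler_normD _ _)); rewrite normrM -/q.
  apply: (le_trans (lerD (ler_wpM2l (normr_ge0 mu) IHk) sk)).
  by rewrite exprS /q; lra.
have c_gt0 : 0 < e / 2 / (`|u T| + 1) by rewrite !divr_gt0 // ltr_wpDl.
move/cvgrPdist_le: (cvg_expr mu_lt1) => /(_ _ c_gt0) [K _ qK].
exists (T + K)%N => // t /= tTK.
have Tt : (T <= t)%N by apply: leq_trans tTK; apply: leq_addr.
have := u_bound (t - T)%N; rewrite subnKC // sub0r normrN => /le_trans; apply.
have := qK (t - T)%N; rewrite /= leq_subRL // => /(_ tTK).
rewrite sub0r normrN normrX -/q => qc.
have : q ^+ (t - T) * `|u T| <= e / 2 / (`|u T| + 1) * `|u T|.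
  exact: ler_wpM2r.
have : e / 2 / (`|u T| + 1) * `|u T| <= e / 2.
  by rewrite -mulrA ger_pMr ?divr_gt0 // mulrC ler_pdivrMr ?ltr_wpDl //; lra.
lra.
Qed.

Lemma geometric_not_cvg0 (mu z : R) : z != 0 -> 1 <= `|mu| ->
  ~ (fun t => mu ^+ t * z) @ \oo --> 0.
Proof.
move=> z_neq0 mu_ge1 /cvgrPdist_le.
have z_gt0 : 0 < `|z| by rewrite normr_gt0.
move=> /(_ (`|z| / 2)) [|K _ /(_ K (leqnn K))]; first by rewrite divr_gt0.
rewrite /= sub0r normrN normrM normrX.
have : `|z| <= `|mu| ^+ K * `|z| by rewrite ler_peMl ?exprn_ege1 // ltW.
lra.
Qed.

End Convergence.

Definition error_mx {R : pzRingType} {n : nat} (P : 'M[R]_n) (a alpha : R) :=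
  a *: (P - alpha%:M).

Section ErrorMatrix.
Variables (R : realType) (n : nat) (A : 'M[R]_n.+1) (a : R).

Lemma error_mx_eigen {b l : R} {v : 'cV_n.+1} : A *m v = l *: v ->
  error_mx A a b *m v = (a * (l - b)) *: v.
Proof.
by move=> Av; rewrite -scalemxAl mulmxBl mul_scalar_mx Av -scalerBl !scalerA.
Qed.

Lemma error_mxpow_eigen {b l : R} {v : 'cV_n.+1} t : A *m v = l *: v ->
  error_mx A a b ^+ t *m v = (a * (l - b)) ^+ t *: v.
Proof.
move=> Av; elim: t => [|t IHt]; first by rewrite !expr0 mul1mx scale1r.
rewrite exprSr -mulmxE -mulmxA (error_mx_eigen Av) -scalemxAr IHt.
by rewrite scalerA -exprS.
Qed.

(* Peel off one factor [X - l]: the component along it evolves by the scalar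
   [a (l - b)], driven by the error of the remaining factors. *)
Lemma error_mxpow_cvg0 (b : R) (s : seq R) (v : 'cV_n.+1) :
  {in s, forall l, `|a * (l - b)| < 1} ->
  horner_mx A (\prod_(l <- s) ('X - l%:P)) *m v = 0 ->
  forall i, (fun t => (error_mx A a b ^+ t *m v) i 0) @ \oo --> 0.
Proof.
elim: s v => [|l s IHs] v s_stable.
  rewrite big_nil rmorph1 mul1mx => -> i.
  by under eq_fun do rewrite mulmx0 mxE; apply: cvg_cst.
rewrite big_cons mulrC rmorphM /= -mulmxA rmorphB /= horner_mx_X horner_mx_C.
set w := (A - l%:M) *m v => /IHs w_cvg i.
have Mv : error_mx A a b *m v = (a * (l - b)) *: v + a *: w.
  rewrite /w -scalemxAl !mulmxBl !mul_scalar_mx scalerBr !scalerA mulrBr.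
  by rewrite scalerBl -!scalerA scalerBr [RHS]addrC addrA subrK.
apply: (@affine_recursion_cvg0 _ _ (fun t => a * (error_mx A a b ^+ t *m w) i 0)
  (a * (l - b))); first exact: s_stable (mem_head _ _).
- rewrite -(mulr0 a); apply: cvgM; first exact: cvg_cst.
  by apply: w_cvg => l' sl'; apply: s_stable; rewrite inE sl' orbT.
- by move=> t; rewrite exprSr -mulmxE -mulmxA Mv mulmxDr -!scalemxAr !mxE.
Qed.

Lemma error_mxpow_not_cvg0 {b l : R} {v : 'cV_n.+1} :
  A *m v = l *: v -> v != 0 -> 1 <= `|a * (l - b)| ->
  exists i, ~ (fun t => (error_mx A a b ^+ t *m v) i 0) @ \oo --> 0.
Proof.
move=> Av v_neq0 unstable.
have [i vi_neq0] : exists i, v i 0 != 0.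
  apply/existsP; apply: contraR v_neq0 => /existsPn v0.
  by apply/eqP/colP => i; rewrite mxE; apply/eqP/negPn/v0.
exists i; under eq_fun do rewrite (error_mxpow_eigen _ Av) mxE.
exact: geometric_not_cvg0.
Qed.

Lemma error_mxpow_stable (s : seq R) (lmin : R) :
  char_poly A = \prod_(l <- s) ('X - l%:P) ->
  {in s, forall l, lmin <= l <= 1} ->
  `|a| * (1 - lmin) < 2 ->
  forall (v : 'cV_n.+1) i,
    (fun t => (error_mx A a ((1 + lmin) / 2) ^+ t *m v) i 0) @ \oo --> 0.
Proof.
move=> charA s_bounds a_small v; apply: (error_mxpow_cvg0 (s := s)).
- move=> l /s_bounds /andP[l_ge l_le].
  have : `|l - (1 + lmin) / 2| <= (1 - lmin) / 2.
    by rewrite ler_norml; apply/andP; lra.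
  by rewrite normrM => /(ler_wpM2l (normr_ge0 a)); lra.
- by rewrite -charA Cayley_Hamilton mul0mx.
Qed.

Lemma error_mxpow_unstable (alpha lmin : R) :
  A *m const_mx 1 = const_mx 1 :> 'cV_n.+1 ->
  (exists2 v : 'cV_n.+1, A *m v = lmin *: v & v != 0) ->
  2 <= `|a| * (1 - lmin) ->
  exists (v : 'cV_n.+1) i,
    ~ (fun t => (error_mx A a alpha ^+ t *m v) i 0) @ \oo --> 0.
Proof.
move=> A1 [v Av v_neq0] a_large.
have [a1_large | a1_small] := lerP 1 (`|a| * (1 - alpha)).
  have A1_eigen : A *m const_mx 1 = 1 *: const_mx 1 :> 'cV_n.+1.
    by rewrite scale1r.
  exists (const_mx 1); apply: (error_mxpow_not_cvg0 A1_eigen).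
  - by apply/eqP => /matrixP /(_ ord0 ord0); rewrite !mxE => /eqP; rewrite oner_eq0.
  - by rewrite normrM (le_trans a1_large) // ler_wpM2l // ler_norm.
exists v; apply: (error_mxpow_not_cvg0 Av v_neq0).
have : `|a| * (alpha - lmin) <= `|a| * `|lmin - alpha|.
  by rewrite ler_wpM2l // distrC ler_norm.
by rewrite normrM; lra.
Qed.

End ErrorMatrix.

Section Mean.
Context {R : realType} {d : measure_display} {T : measurableType d}.
Variable Pr : probability T R.

Definition has_mean (f : T -> R) (m : R) :=
  f \in Lfun Pr 1 /\ ('E_Pr[f] = m%:E)%E.

Lemma integrable_has_mean f m :
  Pr.-integrable setT (EFin \o f) -> ('E_Pr[f] = m%:E)%E -> has_mean f m.
Proof. by move=> /Lfun1_integrable. Qed.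

Lemma eq_has_mean f g m : f =1 g -> has_mean f m -> has_mean g m.
Proof. by move=> /funext <-. Qed.

Lemma has_mean_cst c : has_mean (fun=> c) c.
Proof. by split; [apply: Lfun_cst | apply: expectation_cst]. Qed.

Lemma has_meanD f g m m' :
  has_mean f m -> has_mean g m' -> has_mean (fun om => f om + g om) (m + m').
Proof.
move=> [f1 Ef] [g1 Eg].
by split; [apply: rpredD | rewrite expectationD // Ef Eg].
Qed.

Lemma has_meanB f g m m' :
  has_mean f m -> has_mean g m' -> has_mean (fun om => f om - g om) (m - m').
Proof.
move=> [f1 Ef] [g1 Eg].
by split; [apply: rpredB | rewrite expectationB // Ef Eg].
Qed.

Lemma has_meanZ k f m : has_mean f m -> has_mean (fun om => k * f om) (k * m).
Proof.
move=> [f1 Ef]; split; first exact: (rpredZ k f1).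
rewrite EFinM -Ef -expectationZl //; congr (expectation _ _).
by apply/funext => om; rewrite mulrC.
Qed.

Lemma has_mean_sum (I : finType) (F : I -> T -> R) (m : I -> R) :
  (forall j, has_mean (F j) (m j)) ->
  has_mean (fun om => \sum_j F j om) (\sum_j m j).
Proof.
move=> Fm; elim: (index_enum I) => [|j s IHs].
  by under eq_fun do rewrite big_nil; rewrite big_nil; apply: has_mean_cst.
by under eq_fun do rewrite big_cons; rewrite big_cons; apply: has_meanD.
Qed.

Lemma has_mean_state (a : R) (x r : nat -> T -> R) :
  Pr.-integrable setT (EFin \o x 0%N) ->
  (forall t, Pr.-integrable setT (EFin \o r t) /\ ('E_Pr[r t] = 0)%E) ->
  (forall t om, x t.+1 om = a * x t om + r t om) ->
  forall t, has_mean (x t) (a ^+ t * fine 'E_Pr[x 0%N]).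
Proof.
move=> x0_int r_mean xS; elim=> [|t IHt].
  rewrite expr0 mul1r; apply: (integrable_has_mean x0_int).
  by rewrite fineK // expectation_fin_num //; apply/Lfun1_integrable.
have [r_int Er] := r_mean t.
apply: (eq_has_mean (fun om => esym (xS t om))).
rewrite exprS -mulrA -[_ * _]addr0.
exact: has_meanD (has_meanZ a IHt) (integrable_has_mean r_int Er).
Qed.

End Mean.

Lemma xtil_xhat (T : Type) (R : realType) (N : nat) (P : 'M[R]_N) (a alpha : R)
    (y : 'I_N -> nat -> T -> R) (x0 : 'I_N -> R) :
  xtil P a alpha y x0 =
  xhat P a alpha (fun i t om => \sum_(j < N) P i j * y j t om) x0.
Proof. by apply/funext; elim=> [|t /= ->]. Qed.

Section Estimators.
Context {R : realType} {d : measure_display} {T : measurableType d}.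
Variables (Pr : probability T R) (N : nat) (P : 'M[R]_N) (a : R).
Hypothesis P_row1 : forall i, \sum_j P i j = 1.

Lemma has_mean_xhat (alpha m0 : R) (y : 'I_N -> nat -> T -> R)
    (x0 : 'I_N -> R) :
  (forall i t, has_mean Pr (y i t) (a ^+ t * m0)) ->
  forall t i, has_mean Pr (xhat P a alpha y x0 t i)
    (a ^+ t * m0 + (error_mx P a alpha ^+ t *m \col_j (x0 j - m0)) i 0).
Proof.
move=> y_mean; elim=> [|t IHt] i.
  by rewrite !expr0 mul1r mul1mx mxE addrC subrK; apply: has_mean_cst.
rewrite !exprS -mulmxE -mulmxA.
move: (error_mx P a alpha ^+ t *m _) IHt => u IHt.
have -> : a * a ^+ t * m0 + (error_mx P a alpha *m u) i 0 =
    a * (\sum_j P i j * (a ^+ t * m0 + u j 0)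
         + alpha * (a ^+ t * m0 - (a ^+ t * m0 + u i 0))).
  rewrite -scalemxAl mulmxBl mul_scalar_mx !mxE.
  under [in RHS]eq_bigr do rewrite mulrDr.
  by rewrite big_split -mulr_suml P_row1 /=; ring.
exact: (has_meanZ a (has_meanD (has_mean_sum (fun j => has_meanZ (P i j) (IHt j)))
  (has_meanZ alpha (has_meanB (y_mean i t) (IHt i))))).
Qed.

Lemma asympt_unbiasedP (alpha m0 : R) (x : nat -> T -> R)
    (y : 'I_N -> nat -> T -> R) :
  (forall t, has_mean Pr (x t) (a ^+ t * m0)) ->
  (forall i t, has_mean Pr (y i t) (a ^+ t * m0)) ->
  asympt_unbiased Pr P a alpha x y <->
  forall (v : 'cV_N) i, (fun t => (error_mx P a alpha ^+ t *m v) i 0) @ \oo --> 0.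
Proof.
move=> x_mean y_mean.
have Py_mean i t : has_mean Pr (fun om => \sum_j P i j * y j t om) (a ^+ t * m0).
  rewrite -[a ^+ t * m0]mul1r -(P_row1 i) mulr_suml.
  by apply: has_mean_sum => j; apply: has_meanZ.
have bias_cvgE y' x0 i : (forall i t, has_mean Pr (y' i t) (a ^+ t * m0)) ->
    (fun t => ('E_Pr[(fun om => xhat P a alpha y' x0 t i om - x t om)%R])%E)
      @ \oo --> 0%E <->
    (fun t => (error_mx P a alpha ^+ t *m \col_j (x0 j - m0)) i 0) @ \oo --> 0.
  move=> y'_mean; under eq_cvg => t.
    have [_ ->] := has_meanB (has_mean_xhat alpha x0 y'_mean t i) (x_mean t).
    by rewrite addrAC subrr add0r; over.
  exact: cvg_EFinP.
split.
- move=> unbiased v i; have [] := unbiased (fun j => v j 0 + m0) (fun=> 0) i.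
  rewrite bias_cvgE // => + _; suff -> : \col_j (v j 0 + m0 - m0) = v by [].
  by apply/colP => j; rewrite mxE addrK.
- by move=> cvg0 xh0 xt0 i; rewrite xtil_xhat !bias_cvgE.
Qed.

End Estimators.

Lemma nonincreasing_bounds {disp : Order.disp_t} {T : porderType disp}
    (u : nat -> T) (N : nat) :
  (forall k, (1 <= k < N)%N -> (u k.+1 <= u k)%O) ->
  forall k, (1 <= k <= N)%N -> (u N <= u k <= u 1%N)%O.
Proof.
move=> u_step k kN; set D := [pred k | (1 <= k <= N)%N].
have D_convex : {in D &, forall i j k, (i < k < j)%N -> k \in D}.
  move=> i j /andP[i1 _] /andP[_ jN] l /andP[il lj]; apply/andP.
  by split; [apply: leq_trans i1 (ltnW il) | apply: leq_trans (ltnW lj) jN].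
have u_noninc : {in D &, forall i j, (i <= j)%N -> (u j <= u i)%O}.
  move=> i j iD jD.
  apply: (Order.NatMonotonyTheory.nonincn_inP (f := u) D_convex _ j i jD iD).
  by move=> l /andP[l1 _] /andP[_ lSN]; apply: u_step; rewrite l1.
have [k1 k_le] := andP kN.
by rewrite !u_noninc // inE ?leqnn ?(leq_trans k1) //= k1.
Qed.

Lemma mulmx_const1 (R : pzSemiRingType) (n : nat) (A : 'M[R]_n) :
  (forall i, \sum_j A i j = 1) -> A *m const_mx 1 = const_mx 1 :> 'cV_n.
Proof.
move=> A_row1; apply/colP => i; rewrite !mxE -[RHS](A_row1 i).
by apply: eq_bigr => j _; rewrite mxE mulr1.
Qed.

Lemma sym_eigenvector (F : fieldType) (n : nat) (A : 'M[F]_n) (l : F) :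
  A^T = A -> root (char_poly A) l -> exists2 v : 'cV_n, A *m v = l *: v & v != 0.
Proof.
move=> A_sym; rewrite -eigenvalue_root_char => /eigenvalueP[v vA v_neq0].
by exists v^T; rewrite ?trmx_eq0 // -{1}A_sym -trmx_mul vA linearZ.
Qed.

Theorem proposition1 (R : realType) (d : measure_display) (T : measurableType d)
  (Pr : probability T R) (N : nat) (P : 'M[R]_N) (lam : nat -> R) (a : R)
  (x r : nat -> T -> R) (w y : 'I_N -> nat -> T -> R) :
  (2 <= N)%N ->
  sym_doubly_stochastic P ->
  char_poly P = \prod_(k < N) ('X - (lam k.+1)%:P) ->
  (forall k : nat, (1 <= k < N)%N -> lam k.+1 <= lam k) ->
  lam 1%N = 1 -> lam 2%N < 1 -> -1 < lam N ->
  Pr.-integrable setT (EFin \o x 0%N) ->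
  (forall t, Pr.-integrable setT (EFin \o r t) /\ ('E_Pr[r t] = 0)%E) ->
  (forall i t, Pr.-integrable setT (EFin \o w i t) /\ ('E_Pr[w i t] = 0)%E) ->
  (forall t om, x t.+1 om = a * x t om + r t om) ->
  (forall i t om, y i t om = x t om + w i t om) ->
  (exists alpha : R, 0 < alpha <= 1 /\ asympt_unbiased Pr P a alpha x y)
  <-> `|a| < 2 / (1 - lam N).
Proof.
case: N P w y => [//|n] P w y N_ge2 [P_sym _ P_row1 _] charP lam_noninc.
move=> lam1 lam2 lamN x0_int r_mean w_mean xS yS.
have x_mean := has_mean_state x0_int r_mean xS.
have y_mean i t : has_mean Pr (y i t) (a ^+ t * fine 'E_Pr[x 0%N]).
  have [w_int Ew] := w_mean i t; rewrite -[_ * _]addr0.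
  apply: (eq_has_mean (fun om => esym (yS i t om))).
  exact: has_meanD (x_mean t) (integrable_has_mean w_int Ew).
have unbiasedP alpha := asympt_unbiasedP P_row1 alpha x_mean y_mean.
set s := [seq lam k.+1 | k : 'I_n.+1 <- index_enum 'I_n.+1].
have charS : char_poly P = \prod_(l <- s) ('X - l%:P) by rewrite big_map.
have s_bounds : {in s, forall l, lam n.+1 <= l <= 1}.
  move=> _ /mapP[k _ ->].
  by rewrite -lam1 (nonincreasing_bounds (k := k.+1) lam_noninc (ltn_ord k)).
have lamN_lt1 : lam n.+1 < 1.
  have /andP[lamN_le2 _] := nonincreasing_bounds (k := 2) lam_noninc N_ge2.
  exact: le_lt_trans lamN_le2 lam2.
rewrite ltr_pdivlMr ?subr_gt0 //; split.
- move=> [alpha [_ /unbiasedP unbiased]]; rewrite ltNge; apply/negP => a_large.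
  have lamN_root : root (char_poly P) (lam n.+1).
    by rewrite charS root_prod_XsubC; apply/mapP; exists ord_max; rewrite ?mem_index_enum.
  have [v [i]] := error_mxpow_unstable alpha (mulmx_const1 P_row1)
    (sym_eigenvector P_sym lamN_root) a_large.
  by apply; apply: unbiased.
- move=> a_small; exists ((1 + lam n.+1) / 2); split; first by apply/andP; split; lra.
  by apply/unbiasedP; apply: error_mxpow_stable charS s_bounds a_small.
Qed.
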